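(* Let $R$ be a commutative Artinian ring and let $M$ be a non-zero $R$-module which is PS-hollow representable. Suppose that for every PS-hollow submodule $N$ of $M$, the submodule $In(N)$ is a PS-hollow submodule of $M$. Then $M$ has a minimal PS-hollow representation.
   Context: All rings are commutative with unity. An $R$-submodule $N\leq M$ is PS-hollow (pseudo strongly hollow) iff for every ideal $I\leq R$ and every submodule $L\leq M$: $N\subseteq IM+L$ implies $N\subseteq IM$ or $N\subseteq L$. For a PS-hollow $N\leq M$ put $A_N=\{I\leq R \text{ ideal}: N\subseteq IM\}$, $H_N$ the set of minimal elements of $A_N$ (w.r.t. inclusion), and $In(N)=\bigcap_{I\in H_N} IM$ (with $In(N)=M$ if $H_N=\emptyset$). For a set $H$ of ideals, $N$ is $H$-PS-hollow iff $N$ is PS-hollow and $H_N=H$. $M$ is PS-hollow representable iff $M$ is a finite sum of PS-hollow submodules. A minimal PS-hollow representation of $M$ is an expression $M=\sum_{i=1}^n N_i$ where each $N_i$ is $H_i$-PS-hollow (for some $H_i$), such that (1) $In(N_1),\dots,In(N_n)$ are pairwise incomparable (w.r.t. inclusion) and (2) $N_j\not\subseteq\sum_{i\neq j}N_i$ for every $j$. *)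

From mathcomp Require Import all_boot all_order all_algebra.
Set Implicit Arguments. Unset Strict Implicit. Unset Printing Implicit Defensive.
Import GRing.Theory.
Local Open Scope ring_scope.

Section PSHollow.
Variables (R : comNzRingType) (M : lmodType R).

Definition subsetP (A B : M -> Prop) : Prop := forall x, A x -> B x.

Definition is_ideal (I : R -> Prop) : Prop :=
  [/\ I 0, (forall a b, I a -> I b -> I (a + b)) & (forall r a, I a -> I (r * a))].

Definition is_submodule (N : M -> Prop) : Prop :=
  [/\ N 0, (forall x y, N x -> N y -> N (x + y)) & (forall r x, N x -> N (r *: x))].

Definition IM (I : R -> Prop) : M -> Prop := fun m =>
  exists (n : nat) (a : 'I_n -> R) (x : 'I_n -> M),
    (forall i, I (a i)) /\ m = \sum_(i < n) a i *: x i.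

Definition sum2 (A B : M -> Prop) : M -> Prop := fun m =>
  exists x y, A x /\ B y /\ m = x + y.

Definition PS_hollow (N : M -> Prop) : Prop :=
  is_submodule N /\
  forall (I : R -> Prop) (L : M -> Prop), is_ideal I -> is_submodule L ->
    subsetP N (sum2 (IM I) L) -> subsetP N (IM I) \/ subsetP N L.

Definition A_set (N : M -> Prop) (I : R -> Prop) : Prop :=
  is_ideal I /\ subsetP N (IM I).

Definition H_set (N : M -> Prop) (I : R -> Prop) : Prop :=
  A_set N I /\ forall J, A_set N J -> (forall r, J r -> I r) -> (forall r, I r -> J r).

(* In(N) = intersection of IM over I in H_N (all of M when H_N is empty) *)
Definition In_sub (N : M -> Prop) : M -> Prop := fun m =>
  forall I, H_set N I -> IM I m.

Definition fam_sum n (N : 'I_n -> M -> Prop) (P : pred 'I_n) : M -> Prop := fun m =>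
  exists x : 'I_n -> M, (forall i, P i -> N i (x i)) /\ m = \sum_(i < n | P i) x i.

Definition PS_hollow_representable : Prop :=
  exists n (N : 'I_n -> M -> Prop), (forall i, PS_hollow (N i)) /\
    forall m, fam_sum N predT m.

(* each N_i is H_i-PS-hollow for H_i := H_{N_i}, so "for some H_i" is just PS-hollowness *)
Definition minimal_PS_hollow_representation n (N : 'I_n -> M -> Prop) : Prop :=
  [/\ forall i, PS_hollow (N i),
      forall m, fam_sum N predT m,
      forall i j, i != j -> ~ subsetP (In_sub (N i)) (In_sub (N j))
    & forall j, ~ subsetP (N j) (fam_sum N (fun i => i != j))].

End PSHollow.

Definition artinian (R : comNzRingType) : Prop :=
  forall I : nat -> R -> Prop, (forall k, is_ideal (I k)) ->
    (forall k r, I k.+1 r -> I k r) ->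
    exists k0, forall k, (k0 <= k)%N -> forall r, I k r <-> I k0 r.

From Pilot Require Import Defs.
From mathcomp Require Import all_boot all_order all_algebra.
From Stdlib Require Import Classical.
Set Implicit Arguments. Unset Strict Implicit.
Import GRing.Theory.
Local Open Scope ring_scope.

(* If In(N_i) is contained in In(N_j) for i <> j, replace N_j by the larger
   PS-hollow submodule In(N_j): the family still sums to M, and N_i, lying in
   In(N_i), becomes redundant.  Dropping a redundant summand shortens the
   representation, so repeating these moves ends in a minimal one. *)

Lemma big_ord_neq_lift (V : zmodType) k (j : 'I_k.+1) (F : 'I_k.+1 -> V) :
  \sum_(i < k.+1 | i != j) F i = \sum_(i < k) F (lift j i).
Proof.
apply: (@addrI _ (F j)).
by rewrite -(bigD1 j (P := predT)) // (bigD1_ord j (P := predT)).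
Qed.

Section Representations.
Variables (R : comNzRingType) (M : lmodType R).

Definition PS_hollow_rep n (N : 'I_n -> M -> Prop) : Prop :=
  (forall i, PS_hollow (N i)) /\ forall m, fam_sum N predT m.

Lemma PS_hollow0 (N : M -> Prop) : PS_hollow N -> N 0.
Proof. by case=> -[]. Qed.

Lemma PS_hollowD (N : M -> Prop) x y : PS_hollow N -> N x -> N y -> N (x + y).
Proof. by case=> -[_ addN _] _; apply: addN. Qed.

Lemma sub_In_sub (N : M -> Prop) : Defs.subsetP N (In_sub N).
Proof. by move=> x Nx I [[_ NsubIM] _]; apply: NsubIM. Qed.

Lemma PS_hollow_rep_widen n (N N' : 'I_n -> M -> Prop) :
  PS_hollow_rep N -> (forall i, PS_hollow (N' i)) ->
  (forall i, Defs.subsetP (N i) (N' i)) -> PS_hollow_rep N'.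
Proof.
move=> [_ sumN] hollowN' subNN'; split=> // m.
have [x [Nx ->]] := sumN m.
by exists x; split=> // i _; apply/subNN'/Nx.
Qed.

Lemma PS_hollow_rep_drop k (N : 'I_k.+1 -> M -> Prop) (j : 'I_k.+1) :
  PS_hollow_rep N -> Defs.subsetP (N j) (fam_sum N (fun i => i != j)) ->
  PS_hollow_rep (fun i => N (lift j i)).
Proof.
move=> [hollowN sumN] redundant_j; split=> [i|m]; first exact: hollowN.
have [x [Nx ->]] := sumN m.
have [y [Ny xj_eq]] := redundant_j _ (Nx j isT).
exists (fun i => x (lift j i) + y (lift j i)); split.
  move=> i _; apply: PS_hollowD; [exact: hollowN | exact: Nx |].
  by apply: Ny; rewrite eq_sym neq_lift.
by rewrite big_split /= -!big_ord_neq_lift (bigD1 j) //= xj_eq addrC.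
Qed.

Lemma PS_hollow_rep_In_redundant n (N : 'I_n -> M -> Prop) (i j : 'I_n) :
  (forall N : M -> Prop, PS_hollow N -> PS_hollow (In_sub N)) ->
  PS_hollow_rep N -> i != j -> Defs.subsetP (In_sub (N i)) (In_sub (N j)) ->
  let N' := fun l => if l == j then In_sub (N j) else N l in
  PS_hollow_rep N' /\ Defs.subsetP (N' i) (fam_sum N' (fun l => l != i)).
Proof.
move=> hollowIn repN neq_ij subIn N'; have [hollowN _] := repN.
have hollowN' l : PS_hollow (N' l).
  by rewrite /N'; case: eqP => _; [apply: hollowIn|]; apply: hollowN.
split.
  apply: (PS_hollow_rep_widen repN hollowN') => l x Nx.
  by rewrite /N'; case: eqP => [<-|_ //]; apply: sub_In_sub.
move=> y; rewrite /N' (negbTE neq_ij) => Ny.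
exists (fun l => if l == j then y else 0); split.
  move=> l _; case: eqP => [lj|_]; last exact: PS_hollow0.
  by subst l; rewrite /N'; apply/subIn/sub_In_sub.
rewrite (bigD1 j) 1?eq_sym //= eqxx big1 ?addr0 // => l /andP[_ /negbTE -> //].
Qed.

Lemma PS_hollow_rep_minimal_or_reducible n (N : 'I_n -> M -> Prop) :
  PS_hollow_rep N ->
  [\/ minimal_PS_hollow_representation N,
      exists i j, i != j /\ Defs.subsetP (In_sub (N i)) (In_sub (N j))
    | exists j, Defs.subsetP (N j) (fam_sum N (fun i => i != j))].
Proof.
move=> [hollowN sumN].
have [nested|no_nested] := classic (exists i j, i != j /\
  Defs.subsetP (In_sub (N i)) (In_sub (N j))); first by constructor 2.
have [redundant|no_redundant] := classic (exists j,
  Defs.subsetP (N j) (fam_sum N (fun i => i != j))); first by constructor 3.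
constructor 1; split=> // [i j neq_ij subIn | j redundant_j].
  by apply: no_nested; exists i, j.
by apply: no_redundant; exists j.
Qed.

Lemma PS_hollow_rep_minimal_exists n (N : 'I_n -> M -> Prop) :
  (forall N : M -> Prop, PS_hollow N -> PS_hollow (In_sub N)) ->
  PS_hollow_rep N ->
  exists n' (N' : 'I_n' -> M -> Prop), minimal_PS_hollow_representation N'.
Proof.
move=> hollowIn; elim: n N => [|k IH] N repN;
  case: (PS_hollow_rep_minimal_or_reducible repN)
    => [minN|[i [j [neq_ij subIn]]]|[j redundant_j]]; try by exists _, N.
- by move: neq_ij subIn; case: i.
- by move: redundant_j; case: j.
- have [repN' redundant_i] := PS_hollow_rep_In_redundant hollowIn repN neq_ij subIn.
  exact: IH (PS_hollow_rep_drop repN' redundant_i).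
- exact: IH (PS_hollow_rep_drop repN redundant_j).
Qed.

End Representations.

Theorem mainTheorem1 (R : comNzRingType) (M : lmodType R) :
  artinian R ->
  (exists m : M, m != 0) ->
  PS_hollow_representable M ->
  (forall N : M -> Prop, PS_hollow N -> PS_hollow (In_sub N)) ->
  exists n (N : 'I_n -> M -> Prop), minimal_PS_hollow_representation N.
Proof.
move=> _ _ [n [N repN]] hollowIn.
exact: PS_hollow_rep_minimal_exists hollowIn repN.
Qed.
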